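(* For every semiframe $(X,\le,\ast)$, the semitopology $\mathrm{St}(X,\le,\ast)$ is sober.
   Context: A semiframe is a triple $(X,\le,\ast)$ where $(X,\le)$ is a complete join-semilattice and $\ast\subseteq X\times X$ is commutative, satisfies $x\ast x$ for every $x\neq\bot_X=\bigvee\varnothing$, and $x\ast\bigvee Y$ iff $x\ast y$ for some $y\in Y$. An abstract point is a nonempty, up-closed subset $F\subseteq X$ with $y\ast y'$ for all $y,y'\in F$ that is completely prime ($\bigvee Y\in F$ implies $y\in F$ for some $y\in Y$, for every $Y\subseteq X$ including $\varnothing$). $\mathrm{Op}(x)$ is the set of abstract points containing $x$. $\mathrm{St}(X,\le,\ast)$ is the semitopology whose points are the abstract points and whose open sets are the sets $\mathrm{Op}(x)$, $x\in X$. A semitopology is a set $\mathsf P$ with $\mathcal O\subseteq\mathcal P(\mathsf P)$ containing $\varnothing,\mathsf P$ and closed under arbitrary unions; $(\mathcal O,\subseteq,\between)$ (with $O\between O'$ iff $O\cap O'\neq\varnothing$) is a semiframe. $(\mathsf P,\mathcal O)$ is sober when the map $p\mapsto\mathrm{nbhd}(p)=\{O\in\mathcal O\mid p\in O\}$ is a bijection from $\mathsf P$ onto the set of abstract points of $(\mathcal O,\subseteq,\between)$. *)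

Record Semiframe := {
  sf_car :> Type;
  sf_le : sf_car -> sf_car -> Prop;
  sf_join : (sf_car -> Prop) -> sf_car;
  sf_ast : sf_car -> sf_car -> Prop;
  sf_le_refl : forall x, sf_le x x;
  sf_le_trans : forall x y z, sf_le x y -> sf_le y z -> sf_le x z;
  sf_le_antisym : forall x y, sf_le x y -> sf_le y x -> x = y;
  sf_join_ub : forall (Y : sf_car -> Prop) y, Y y -> sf_le y (sf_join Y);
  sf_join_least : forall (Y : sf_car -> Prop) z,
      (forall y, Y y -> sf_le y z) -> sf_le (sf_join Y) z;
  sf_ast_comm : forall x y, sf_ast x y -> sf_ast y x;
  sf_ast_refl : forall x, x <> sf_join (fun _ => False) -> sf_ast x x;
  sf_ast_join : forall x (Y : sf_car -> Prop),
      sf_ast x (sf_join Y) <-> exists y, Y y /\ sf_ast x y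
}.

Definition abstract_point {A : Type} (le : A -> A -> Prop)
  (join : (A -> Prop) -> A) (ast : A -> A -> Prop) (F : A -> Prop) : Prop :=
  (exists x, F x) /\
  (forall x y, F x -> le x y -> F y) /\
  (forall x y, F x -> F y -> ast x y) /\
  (forall Y : A -> Prop, F (join Y) -> exists y, Y y /\ F y).

Record Semitopology := {
  st_pts :> Type;
  st_open : (st_pts -> Prop) -> Prop;
  st_open_empty : st_open (fun _ => False);
  st_open_full : st_open (fun _ => True);
  st_open_union : forall S : (st_pts -> Prop) -> Prop,
      (forall U, S U -> st_open U) -> st_open (fun p => exists U, S U /\ U p)
}.

Section OpensSemiframe.
Variable T : Semitopology.

Definition opens := { U : T -> Prop | st_open T U }.

Definition opens_le (U V : opens) : Prop :=
  forall p, proj1_sig U p -> proj1_sig V p.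

Definition opens_between (U V : opens) : Prop :=
  exists p, proj1_sig U p /\ proj1_sig V p.

Definition opens_join (Y : opens -> Prop) : opens :=
  exist _ (fun p => exists V, (exists U : opens, Y U /\ proj1_sig U = V) /\ V p)
    (st_open_union T (fun V => exists U : opens, Y U /\ proj1_sig U = V)
       (fun V HV => match HV with
                    | ex_intro _ U (conj _ e) =>
                        match e in _ = W return st_open T W with
                        | eq_refl => proj2_sig U end end)).

Definition nbhd (p : T) : opens -> Prop := fun U => proj1_sig U p.

(** Sober: p |-> nbhd p is a bijection from the points onto the abstract
    points of (O, ⊆, ≬). *)
Definition sober : Prop :=
  (forall p : T, abstract_point opens_le opens_join opens_between (nbhd p)) /\
  (forall p q : T, (forall U, nbhd p U <-> nbhd q U) -> p = q) /\
  (forall F : opens -> Prop,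
      abstract_point opens_le opens_join opens_between F ->
      exists p : T, forall U, F U <-> nbhd p U).
End OpensSemiframe.

Section St.
Variable X : Semiframe.

Definition apoint := { F : X -> Prop | abstract_point (sf_le X) (sf_join X) (sf_ast X) F }.

Definition Op (x : X) : apoint -> Prop := fun P => proj1_sig P x.

Definition St_open (U : apoint -> Prop) : Prop :=
  exists x : X, forall P, U P <-> Op x P.

Lemma St_open_empty : St_open (fun _ => False).
Proof.
  exists (sf_join X (fun _ => False)); intros P; destruct (proj2_sig P) as [_ [_ [_ Hp]]]; unfold Op.
  split; [tauto|]. intros H. destruct (Hp _ H) as [y [[] _]].
Qed.

Lemma St_open_full : St_open (fun _ => True).
Proof.
  exists (sf_join X (fun _ => True)); intros P; destruct (proj2_sig P) as [[x Hx] [Hup _]]; unfold Op.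
  split; [|tauto]. intros _. apply (Hup x); [exact Hx|]. apply sf_join_ub; exact I.
Qed.

Lemma St_open_union : forall S : (apoint -> Prop) -> Prop,
  (forall U, S U -> St_open U) -> St_open (fun p => exists U, S U /\ U p).
Proof.
  intros S HS.
  exists (sf_join X (fun x => exists U, S U /\ forall P, U P <-> Op x P)).
  intros P. split.
  - intros [U [SU UP]]. destruct (HS U SU) as [x Hx].
    pose proof (proj1 (Hx _) UP) as Fx. unfold Op in *.
    destruct (proj2_sig P) as [_ [Hup _]].
    apply (Hup x); [exact Fx|]. apply sf_join_ub. exists U; split; [exact SU|].
    exact Hx.
  - intros H. unfold Op in H. destruct (proj2_sig P) as [_ [_ [_ Hp]]]. destruct (Hp _ H) as [y [[U [SU HU]] Fy]].
    exists U; split; [exact SU|]. apply (proj2 (HU _)). unfold Op. exact Fy.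
Qed.

Definition St : Semitopology :=
  {| st_pts := apoint; st_open := St_open;
     st_open_empty := St_open_empty; st_open_full := St_open_full;
     st_open_union := St_open_union |}.
End St.

(* The opens of St(X) are exactly the sets Op(x), and x |-> Op(x) is monotone
   and preserves joins on abstract points (by complete primeness).  Hence an
   abstract point F of the opens pulls back along Op to an abstract point of X,
   namely {x | Op(x) ∈ F}, whose neighbourhood filter is F again; conversely a
   point P is recovered from its neighbourhoods as {x | P ∈ Op(x)}. *)

From Stdlib Require Import ProofIrrelevance FunctionalExtensionality PropExtensionality.

Lemma nbhd_abstract_point (T : Semitopology) (p : T) :
  abstract_point (opens_le T) (opens_join T) (opens_between T) (nbhd T p).
Proof.
  split; [|split; [|split]].
  - exists (exist _ (fun _ => True) (st_open_full T)). exact I.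
  - intros U V HU HUV. exact (HUV p HU).
  - intros U V HU HV. exists p. split; assumption.
  - intros Y [V [[U [YU <-]] Up]]. exists U. split; assumption.
Qed.

Section StOpens.
Variable X : Semiframe.

Definition Op_open (x : X) : opens (St X) :=
  exist (St_open X) (Op X x) (ex_intro _ x (fun P => iff_refl _)).

Lemma apoint_eq (P Q : apoint X) : (forall x, Op X x P <-> Op X x Q) -> P = Q.
Proof.
  destruct P as [F HF], Q as [G HG]; intros H.
  assert (F = G) as <-.
  { extensionality x. apply propositional_extensionality. exact (H x). }
  f_equal. apply proof_irrelevance.
Qed.

Lemma Op_open_le (x y : X) : sf_le X x y -> opens_le (St X) (Op_open x) (Op_open y).
Proof.
  intros Hxy P Px. destruct (proj2_sig P) as [_ [Hup _]]. exact (Hup x y Px Hxy).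
Qed.

Lemma Op_open_ast (x y : X) :
  opens_between (St X) (Op_open x) (Op_open y) -> sf_ast X x y.
Proof.
  intros [P [Px Py]]. destruct (proj2_sig P) as [_ [_ [Hast _]]]. exact (Hast x y Px Py).
Qed.

Lemma Op_open_join (Y : X -> Prop) :
  opens_le (St X) (Op_open (sf_join X Y))
    (opens_join (St X) (fun U => exists y, Y y /\ U = Op_open y)).
Proof.
  intros P PY. destruct (proj2_sig P) as [_ [_ [_ Hprime]]].
  destruct (Hprime Y PY) as [y [Yy Py]].
  exists (Op X y). split; [|exact Py].
  exists (Op_open y). split; [|reflexivity]. exists y. split; [exact Yy | reflexivity].
Qed.

Lemma opens_St_Op (U : opens (St X)) :
  exists x, opens_le (St X) U (Op_open x) /\ opens_le (St X) (Op_open x) U.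
Proof.
  destruct U as [U [x Hx]]. exists x.
  split; intros P HP; apply (Hx P); exact HP.
Qed.

Section PullBack.
Variable F : opens (St X) -> Prop.
Hypothesis HF : abstract_point (opens_le (St X)) (opens_join (St X)) (opens_between (St X)) F.

Definition Op_preimage (x : X) : Prop := F (Op_open x).

Lemma Op_preimage_abstract_point :
  abstract_point (sf_le X) (sf_join X) (sf_ast X) Op_preimage.
Proof.
  destruct HF as [[U0 FU0] [Hup [Hbet Hprime]]].
  split; [|split; [|split]].
  - destruct (opens_St_Op U0) as [x [HUx _]].
    exists x. exact (Hup _ _ FU0 HUx).
  - intros x y Fx Hxy. exact (Hup _ _ Fx (Op_open_le x y Hxy)).
  - intros x y Fx Fy. exact (Op_open_ast x y (Hbet _ _ Fx Fy)).
  - intros Y FY.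
    destruct (Hprime _ (Hup _ _ FY (Op_open_join Y))) as [U [[y [Yy ->]] Fy]].
    exists y. split; assumption.
Qed.

Definition Op_preimage_point : St X := exist _ Op_preimage Op_preimage_abstract_point.

Lemma nbhd_Op_preimage_point (U : opens (St X)) :
  F U <-> nbhd (St X) Op_preimage_point U.
Proof.
  destruct HF as [_ [Hup _]].
  destruct (opens_St_Op U) as [x [HUx HxU]].
  split; intros HU.
  - apply HxU. exact (Hup _ _ HU HUx).
  - exact (Hup _ _ (HUx _ HU) HxU).
Qed.
End PullBack.
End StOpens.

Theorem proposition7p15 : forall X : Semiframe, sober (St X).
Proof.
  intros X. split; [|split].
  - apply nbhd_abstract_point.
  - intros p q H. apply apoint_eq. intros x. exact (H (Op_open X x)).
  - intros F HF. exists (Op_preimage_point X F HF).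
    exact (nbhd_Op_preimage_point X F HF).
Qed.
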